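(* Let $\Gamma$ be a group and $S$ a $\Gamma$-graded inverse semigroup. The following are equivalent: (1) $S$ is locally strongly graded; (2) for all $\alpha\in\Gamma$ and $u\in E(S)\setminus\{0\}$ there is $v\in E(S)_\alpha\setminus\{0\}$ with $v\le u$; (3) for all $\alpha,\beta\in\Gamma$ and $s\in S_{\alpha\beta}\setminus\{0\}$ there is $u\in E(S)\setminus\{0\}$ with $u\le s^{-1}s$ and $su\in S_\alpha S_\beta$; (4) for all $\alpha,\beta\in\Gamma$ and $s\in S_{\alpha\beta}\setminus\{0\}$ there is $u\in E(S)\setminus\{0\}$ with $u\le ss^{-1}$ and $us\in S_\alpha S_\beta$.
   Context: Semigroups have a zero; $S$ is $\Gamma$-graded via $\deg:S\setminus\{0\}\to\Gamma$ with $\deg(st)=\deg(s)\deg(t)$ whenever $st\neq0$; $S_\alpha=\deg^{-1}(\alpha)\cup\{0\}$. $E(S)$ is the set of idempotents, $E(S)_\alpha=\{ss^{-1}:s\in S_\alpha\}$. Natural partial order: $s\le t$ iff $s=tu$ for some $u\in E(S)$. $S$ is locally strongly graded if for all $\alpha,\beta\in\Gamma$ and $s\in S_{\alpha\beta}\setminus\{0\}$ there exists $t\in S_\alpha S_\beta\setminus\{0\}$ with $t\le s$. *)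

Set Implicit Arguments.

Record Group := {
  g_carrier :> Type;
  g_mul : g_carrier -> g_carrier -> g_carrier;
  g_one : g_carrier;
  g_inv : g_carrier -> g_carrier;
  g_mulA : forall a b c, g_mul a (g_mul b c) = g_mul (g_mul a b) c;
  g_mul1l : forall a, g_mul g_one a = a;
  g_mulVl : forall a, g_mul (g_inv a) a = g_one
}.

Record InvSemigroup0 := {
  s_carrier :> Type;
  s_mul : s_carrier -> s_carrier -> s_carrier;
  s_zero : s_carrier;
  s_inv : s_carrier -> s_carrier;
  s_mulA : forall a b c, s_mul a (s_mul b c) = s_mul (s_mul a b) c;
  s_mul0l : forall a, s_mul s_zero a = s_zero;
  s_mul0r : forall a, s_mul a s_zero = s_zero;
  s_inv_l : forall s, s_mul (s_mul s (s_inv s)) s = s;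
  s_inv_r : forall s, s_mul (s_mul (s_inv s) s) (s_inv s) = s_inv s;
  s_inv_uniq : forall s t, s_mul (s_mul s t) s = s -> s_mul (s_mul t s) t = t ->
                 t = s_inv s
}.

Arguments g_mul {_}. Arguments g_one {_}. Arguments g_inv {_}.
Arguments s_mul {_}. Arguments s_zero {_}. Arguments s_inv {_}.

Section Graded.
Context {G : Group} {S : InvSemigroup0}.

(** deg : S \ {0} -> G, represented as a total function whose value at 0 is
    irrelevant; multiplicativity is required only for nonzero products. *)
Definition is_grading (deg : S -> G) : Prop :=
  forall s t : S, s_mul s t <> s_zero -> deg (s_mul s t) = g_mul (deg s) (deg t).

Definition homog (deg : S -> G) (a : G) (s : S) : Prop :=
  s = s_zero \/ (s <> s_zero /\ deg s = a).

Definition idem (e : S) : Prop := s_mul e e = e.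

Definition idem_deg (deg : S -> G) (a : G) (e : S) : Prop :=
  exists s, homog deg a s /\ e = s_mul s (s_inv s).

Definition nat_le (s t : S) : Prop := exists u, idem u /\ s = s_mul t u.

Definition prod_homog (deg : S -> G) (a b : G) (t : S) : Prop :=
  exists x y, homog deg a x /\ homog deg b y /\ t = s_mul x y.

Definition locally_strongly_graded (deg : S -> G) : Prop :=
  forall (a b : G) (s : S), homog deg (g_mul a b) s -> s <> s_zero ->
    exists t, prod_homog deg a b t /\ t <> s_zero /\ nat_le t s.

End Graded.

(** In an inverse semigroup the idempotents commute, so the natural order is
    described by restrictions: [t <= s] iff [t = s u] for an idempotent
    [u <= s^-1 s], iff [t = u s] for an idempotent [u <= s s^-1]; this gives
    (1) <-> (3) and (1) <-> (4) without using the grading.  For (1) -> (2),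
    apply (1) to a nonzero idempotent [u], which lies in [S_(a a^-1)]: the
    resulting [x y <= u] with [x] in [S_a] is idempotent, and equals
    [(x y y^-1) (x y y^-1)^-1], an element of [E(S)_a].  For (2) -> (4), a
    nonzero [x x^-1 <= s s^-1] with [x] in [S_a] gives
    [x x^-1 s = x (x^-1 s)] in [S_a S_b]. *)

From Stdlib Require Import Classical.

Set Implicit Arguments.
Unset Strict Implicit.

Local Notation "x ** y" := (s_mul x y) (at level 40, left associativity).

Section InverseSemigroup.

Variable S : InvSemigroup0.
Implicit Types e f s t u x y : S.

Lemma s_invK s : s_inv (s_inv s) = s.
Proof. symmetry; apply s_inv_uniq; [apply s_inv_r | apply s_inv_l]. Qed.

Lemma idem_mulVr s : idem (s ** s_inv s).
Proof. unfold idem; rewrite s_mulA, s_inv_l; reflexivity. Qed.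

Lemma idem_mulVl s : idem (s_inv s ** s).
Proof. unfold idem; rewrite !s_mulA, s_inv_r; reflexivity. Qed.

Lemma idem_inv e : idem e -> s_inv e = e.
Proof. intro He; symmetry; apply s_inv_uniq; rewrite !He; reflexivity. Qed.

Lemma idem_mulr_id x e : idem e -> x ** e ** e = x ** e.
Proof. intro He; rewrite <- s_mulA, He; reflexivity. Qed.

(* [f (e f)^-1 e] is an inverse of [e f], hence equals [(e f)^-1], which is
   then idempotent and its own inverse. *)
Lemma idem_mul e f : idem e -> idem f -> idem (e ** f).
Proof.
  intros He Hf; set (x := s_inv (e ** f)).
  assert (Hx : f ** x ** e = x).
  { apply s_inv_uniq.
    - replace (e ** f ** (f ** x ** e) ** (e ** f)) with (e ** f ** x ** (e ** f))
        by (rewrite !s_mulA, (idem_mulr_id (e ** f ** f ** x) He), (idem_mulr_id _ Hf);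
            reflexivity).
      apply s_inv_l.
    - replace (f ** x ** e ** (e ** f) ** (f ** x ** e))
        with (f ** (x ** (e ** f) ** x) ** e)
        by (rewrite !s_mulA, (idem_mulr_id _ Hf), (idem_mulr_id (f ** x) He);
            reflexivity).
      unfold x; rewrite s_inv_r; reflexivity. }
  assert (Hxx : idem x).
  { unfold idem; rewrite <- Hx at 1 2.
    replace (f ** x ** e ** (f ** x ** e)) with (f ** (x ** (e ** f) ** x) ** e)
      by (rewrite !s_mulA; reflexivity).
    unfold x; rewrite s_inv_r; exact Hx. }
  rewrite <- (s_invK (e ** f)); fold x; rewrite idem_inv; assumption.
Qed.

Lemma idem_mulC e f : idem e -> idem f -> e ** f = f ** e.
Proof.
  intros He Hf; assert (Hef := idem_mul He Hf).
  rewrite <- (idem_inv Hef); symmetry; apply s_inv_uniq.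
  - rewrite !s_mulA, (idem_mulr_id e Hf), (idem_mulr_id (e ** f) He), <- s_mulA;
    exact Hef.
  - rewrite !s_mulA, (idem_mulr_id f He), (idem_mulr_id (f ** e) Hf), <- s_mulA.
    exact (idem_mul Hf He).
Qed.

Lemma s_invM s t : s_inv (s ** t) = s_inv t ** s_inv s.
Proof.
  symmetry; apply s_inv_uniq.
  - replace (s ** t ** (s_inv t ** s_inv s) ** (s ** t))
      with (s ** ((t ** s_inv t) ** (s_inv s ** s)) ** t)
      by (rewrite !s_mulA; reflexivity).
    rewrite (idem_mulC (idem_mulVr t) (idem_mulVl s)), !s_mulA, s_inv_l,
      <- (s_mulA _ s t), <- (s_mulA _ s _ t), s_inv_l; reflexivity.
  - replace (s_inv t ** s_inv s ** (s ** t) ** (s_inv t ** s_inv s))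
      with (s_inv t ** ((s_inv s ** s) ** (t ** s_inv t)) ** s_inv s)
      by (rewrite !s_mulA; reflexivity).
    rewrite <- (idem_mulC (idem_mulVr t) (idem_mulVl s)), !s_mulA, s_inv_r,
      <- (s_mulA _ (s_inv t) (s_inv s)), <- (s_mulA _ (s_inv t) _ (s_inv s)), s_inv_r;
      reflexivity.
Qed.

Lemma mul_nz_l x y : x ** y <> s_zero -> x <> s_zero.
Proof. intros H ->; apply H, s_mul0l. Qed.

Lemma mul_nz_r x y : x ** y <> s_zero -> y <> s_zero.
Proof. intros H ->; apply H, s_mul0r. Qed.

Lemma mulV_nz s : s <> s_zero -> s ** s_inv s <> s_zero.
Proof. intros Hs H0; apply Hs; rewrite <- (s_inv_l _ s), H0; apply s_mul0l. Qed.

Lemma inv_nz s : s <> s_zero -> s_inv s <> s_zero.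
Proof. intros Hs H0; apply (mulV_nz Hs); rewrite H0; apply s_mul0r. Qed.

Lemma nat_le_idem e t : idem e -> nat_le t e -> idem t.
Proof. intros He [w [Hw ->]]; exact (idem_mul He Hw). Qed.

Lemma nat_le_idem_mull e u : idem e -> nat_le u e -> e ** u = u.
Proof. intros He [w [_ ->]]; rewrite s_mulA, He; reflexivity. Qed.

Lemma idem_mul_conj e s : idem e -> e ** s = s ** (s_inv s ** e ** s).
Proof.
  intro He; rewrite !s_mulA, <- (idem_mulC He (idem_mulVr s)), <- (s_mulA _ e _ s),
    s_inv_l; reflexivity.
Qed.

Lemma idem_conj e s : idem e -> idem (s_inv s ** e ** s).
Proof.
  intro He; unfold idem.
  replace (s_inv s ** e ** s ** (s_inv s ** e ** s))
    with (s_inv s ** (e ** (s ** s_inv s)) ** e ** s)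
    by (rewrite !s_mulA; reflexivity).
  rewrite (idem_mulC He (idem_mulVr s)), !s_mulA, (idem_mulr_id _ He), s_inv_r;
    reflexivity.
Qed.

Lemma nat_le_idem_mul e s : idem e -> nat_le (e ** s) s.
Proof. intro He; exists (s_inv s ** e ** s); auto using idem_conj, idem_mul_conj. Qed.

Lemma nat_le_restrict_r t s :
  nat_le t s -> exists u, idem u /\ nat_le u (s_inv s ** s) /\ t = s ** u.
Proof.
  intros [w [Hw ->]]; exists (s_inv s ** s ** w); split; [|split].
  - exact (idem_mul (idem_mulVl s) Hw).
  - exists w; auto.
  - rewrite !s_mulA, s_inv_l; reflexivity.
Qed.

Lemma nat_le_restrict_l t s :
  nat_le t s -> exists u, idem u /\ nat_le u (s ** s_inv s) /\ t = u ** s.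
Proof.
  intros [w [Hw ->]]; exists (s ** w ** s_inv s); split; [|split].
  - rewrite <- (s_invK s) at 1; exact (idem_conj (s_inv s) Hw).
  - exists (s ** w ** s_inv s); split.
    + rewrite <- (s_invK s) at 1; exact (idem_conj (s_inv s) Hw).
    + rewrite !s_mulA, s_inv_l; reflexivity.
  - rewrite <- !s_mulA, (idem_mulC Hw (idem_mulVl s)), !s_mulA, s_inv_l; reflexivity.
Qed.

Lemma restrict_r_nz u s :
  nat_le u (s_inv s ** s) -> u <> s_zero -> s ** u <> s_zero.
Proof.
  intros Hle Hu H0; apply Hu.
  rewrite <- (nat_le_idem_mull (idem_mulVl s) Hle), <- s_mulA, H0; apply s_mul0r.
Qed.

Lemma restrict_l_nz u s :
  nat_le u (s ** s_inv s) -> u <> s_zero -> u ** s <> s_zero.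
Proof.
  intros Hle Hu H0; apply Hu.
  rewrite <- (nat_le_idem_mull (idem_mulVr s) Hle),
    (idem_mulC (idem_mulVr s) (nat_le_idem (idem_mulVr s) Hle)), s_mulA, H0;
    apply s_mul0l.
Qed.

End InverseSemigroup.

Section Group.

Variable G : Group.
Implicit Types a b c : G.

Lemma g_mulI c a b : g_mul c a = g_mul c b -> a = b.
Proof.
  intro H; rewrite <- (g_mul1l _ a), <- (g_mul1l _ b), <- (g_mulVl _ c), <- !g_mulA, H;
    reflexivity.
Qed.

Lemma g_mul1r a : g_mul a g_one = a.
Proof.
  apply g_mulI with (c := g_inv a); rewrite g_mulA, g_mulVl, g_mul1l; reflexivity.
Qed.

Lemma g_mulVr a : g_mul a (g_inv a) = g_one.
Proof.
  apply g_mulI with (c := g_inv a); rewrite g_mulA, g_mulVl, g_mul1l, g_mul1r;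
    reflexivity.
Qed.

Lemma g_mulKV a b : g_mul (g_inv a) (g_mul a b) = b.
Proof. rewrite g_mulA, g_mulVl; apply g_mul1l. Qed.

End Group.

Section Graded.

Variables (G : Group) (S : InvSemigroup0) (deg : S -> G).
Hypothesis Hdeg : is_grading deg.

Lemma homog_deg a x : homog deg a x -> x <> s_zero -> deg x = a.
Proof. intros [H | [_ H]] Hx; [contradiction | exact H]. Qed.

Lemma deg_idem e : idem e -> e <> s_zero -> deg e = g_one.
Proof.
  intros He Hnz; apply g_mulI with (c := deg e).
  rewrite g_mul1r, <- Hdeg, He; [reflexivity | rewrite He; exact Hnz].
Qed.

Lemma homog_idem e : idem e -> homog deg g_one e.
Proof.
  intro He; destruct (classic (e = s_zero)) as [-> | Hnz]; [left; reflexivity | right].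
  split; [exact Hnz | exact (deg_idem He Hnz)].
Qed.

Lemma homog_mul a b x y :
  homog deg a x -> homog deg b y -> homog deg (g_mul a b) (x ** y).
Proof.
  intros Hx Hy; destruct (classic (x ** y = s_zero)) as [H0 | Hnz]; [left; exact H0|].
  right; split; [exact Hnz|].
  rewrite (Hdeg Hnz), (homog_deg Hx (mul_nz_l Hnz)), (homog_deg Hy (mul_nz_r Hnz));
    reflexivity.
Qed.

Lemma homog_inv a x : homog deg a x -> homog deg (g_inv a) (s_inv x).
Proof.
  intros [-> | [Hnz <-]].
  - left; apply idem_inv, s_mul0l.
  - right; split; [exact (inv_nz Hnz)|].
    apply g_mulI with (c := deg x); rewrite g_mulVr, <- Hdeg by exact (mulV_nz Hnz).
    exact (deg_idem (idem_mulVr x) (mulV_nz Hnz)).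
Qed.

Lemma idem_deg_idem_mul a x y :
  homog deg a x -> idem (x ** y) -> idem_deg deg a (x ** y).
Proof.
  intros Hx Hxy; exists (x ** (y ** s_inv y)); split.
  - rewrite <- (g_mul1r a); apply homog_mul; [exact Hx | apply homog_idem, idem_mulVr].
  - transitivity (x ** y ** s_inv (x ** y)).
    { rewrite (idem_inv Hxy); symmetry; exact Hxy. }
    rewrite (s_invM x (y ** s_inv y)), (idem_inv (idem_mulVr y)), s_invM,
      (s_mulA _ (x ** (y ** s_inv y))), (idem_mulr_id x (idem_mulVr y)), !s_mulA;
      reflexivity.
Qed.

Lemma prod_homog_idem_deg_mul a b v s :
  idem_deg deg a v -> homog deg (g_mul a b) s -> prod_homog deg a b (v ** s).
Proof.
  intros [x [Hx ->]] Hs; exists x, (s_inv x ** s); split; [exact Hx | split].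
  - rewrite <- (g_mulKV a b); exact (homog_mul (homog_inv Hx) Hs).
  - rewrite s_mulA; reflexivity.
Qed.

End Graded.

Definition idem_deg_dense (G : Group) (S : InvSemigroup0) (deg : S -> G) : Prop :=
  forall (a : G) (u : S), idem u -> u <> s_zero ->
    exists v, idem_deg deg a v /\ v <> s_zero /\ nat_le v u.

Definition locally_strongly_graded_r (G : Group) (S : InvSemigroup0) (deg : S -> G)
  : Prop :=
  forall (a b : G) (s : S), homog deg (g_mul a b) s -> s <> s_zero ->
    exists u, idem u /\ u <> s_zero /\
      nat_le u (s_inv s ** s) /\ prod_homog deg a b (s ** u).

Definition locally_strongly_graded_l (G : Group) (S : InvSemigroup0) (deg : S -> G)
  : Prop :=
  forall (a b : G) (s : S), homog deg (g_mul a b) s -> s <> s_zero ->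
    exists u, idem u /\ u <> s_zero /\
      nat_le u (s ** s_inv s) /\ prod_homog deg a b (u ** s).

Section Equivalences.

Variables (G : Group) (S : InvSemigroup0) (deg : S -> G).

Lemma lsg_iff_r : locally_strongly_graded deg <-> locally_strongly_graded_r deg.
Proof.
  split; intros P a b s Hs Hsn.
  - destruct (P a b s Hs Hsn) as [t [Ht [Htn Hts]]].
    destruct (nat_le_restrict_r Hts) as [u [Hu [Hle ->]]].
    exists u; split; [exact Hu | split; [exact (mul_nz_r Htn) | split; assumption]].
  - destruct (P a b s Hs Hsn) as [u [Hu [Hun [Hle Hp]]]].
    exists (s ** u); split; [exact Hp | split; [exact (restrict_r_nz Hle Hun) |]].
    exists u; split; [exact Hu | reflexivity].
Qed.

Lemma lsg_iff_l : locally_strongly_graded deg <-> locally_strongly_graded_l deg.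
Proof.
  split; intros P a b s Hs Hsn.
  - destruct (P a b s Hs Hsn) as [t [Ht [Htn Hts]]].
    destruct (nat_le_restrict_l Hts) as [u [Hu [Hle ->]]].
    exists u; split; [exact Hu | split; [exact (mul_nz_l Htn) | split; assumption]].
  - destruct (P a b s Hs Hsn) as [u [Hu [Hun [Hle Hp]]]].
    exists (u ** s); split; [exact Hp | split].
    + exact (restrict_l_nz Hle Hun).
    + exact (nat_le_idem_mul s Hu).
Qed.

Hypothesis Hdeg : is_grading deg.

Lemma lsg_idem_deg_dense : locally_strongly_graded deg -> idem_deg_dense deg.
Proof.
  intros P a u Hu Hun.
  assert (Hh : homog deg (g_mul a (g_inv a)) u).
  { right; split; [exact Hun|]; rewrite g_mulVr; exact (deg_idem Hdeg Hu Hun). }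
  destruct (P _ _ _ Hh Hun) as [t [[x [y [Hx [_ ->]]]] [Htn Hle]]].
  exists (x ** y); split; [|split; assumption].
  exact (idem_deg_idem_mul Hdeg Hx (nat_le_idem Hu Hle)).
Qed.

Lemma idem_deg_dense_lsg_l : idem_deg_dense deg -> locally_strongly_graded_l deg.
Proof.
  intros P a b s Hs Hsn.
  destruct (P a (s ** s_inv s) (idem_mulVr s) (mulV_nz Hsn)) as [v [Hv [Hvn Hle]]].
  exists v; split; [exact (nat_le_idem (idem_mulVr s) Hle) | split; [exact Hvn | split]].
  - exact Hle.
  - exact (prod_homog_idem_deg_mul Hdeg Hv Hs).
Qed.

Lemma lsg_iff_idem_deg_dense : locally_strongly_graded deg <-> idem_deg_dense deg.
Proof.
  split; [exact lsg_idem_deg_dense |].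
  intro P; apply lsg_iff_l; exact (idem_deg_dense_lsg_l P).
Qed.

End Equivalences.

Theorem proposition2p15 (G : Group) (S : InvSemigroup0) (deg : S -> G)
  (Hdeg : is_grading deg) :
  let P1 := locally_strongly_graded deg in
  let P2 := forall (a : G) (u : S), idem u -> u <> s_zero ->
              exists v, idem_deg deg a v /\ v <> s_zero /\ nat_le v u in
  let P3 := forall (a b : G) (s : S), homog deg (g_mul a b) s -> s <> s_zero ->
              exists u, idem u /\ u <> s_zero /\
                nat_le u (s_mul (s_inv s) s) /\ prod_homog deg a b (s_mul s u) in
  let P4 := forall (a b : G) (s : S), homog deg (g_mul a b) s -> s <> s_zero ->
              exists u, idem u /\ u <> s_zero /\
                nat_le u (s_mul s (s_inv s)) /\ prod_homog deg a b (s_mul u s) in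
  (P1 <-> P2) /\ (P1 <-> P3) /\ (P1 <-> P4).
Proof.
  intros P1 P2 P3 P4; split; [|split].
  - exact (lsg_iff_idem_deg_dense Hdeg).
  - apply lsg_iff_r.
  - apply lsg_iff_l.
Qed.
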